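(* Let $G=(V,E)$ be a fixed graph, $v,u$ two non-adjacent vertices, and $k$ an integer. Assume that for some $\alpha\in[0,1]$, for all $c,q\in[k]$ with $c\ne q$, the set $\Omega(c,c)$ is $\alpha$-isomorphic to $\Omega(q,c)$ with $\alpha$-function $H(\cdot,q)$. Let $\nu$ be the uniform distribution over the good $k$-colourings of $G$, and let $\nu'$ be the distribution of the output of STEP when its input colouring is uniformly distributed over the $k$-colourings of $G$. Then $\|\nu-\nu'\|\le\alpha$.
   Context: $[k]=\{1,\dots,k\}$; $\Omega$ is the set of proper $k$-colourings of $G$ (assumed non-empty), $\sigma_w$ the colour of $w$, and $\Omega(c,q)$ the set of $\sigma\in\Omega$ with $\sigma_v=c,\sigma_u=q$. A colouring $\sigma$ is good if $\sigma_v\ne\sigma_u$ and bad otherwise. $\|\nu_a-\nu_b\|=\max_{A\subseteq[k]^V}|\nu_a(A)-\nu_b(A)|$. Disagreement graph: for $\sigma\in\Omega$ and $q\ne\sigma_v$, $Q_{\sigma_v,q}$ is the subgraph induced by all vertices reachable from $v$ by a path in $G$ all of whose vertices have colour in $\{\sigma_v,q\}$. The $q$-switching $H(\sigma,q)$ swaps the colours $\sigma_v$ and $q$ on the vertices of $Q_{\sigma_v,q}$, leaving other vertices unchanged. STEP: on input $X\in\Omega$, if $X$ is good output $X$; if $X$ is bad choose $q$ uniformly at random from $[k]\setminus\{X(v)\}$ and output $H(X,q)$. $\alpha$-isomorphism: $\Omega_1$ is $\alpha$-isomorphic to $\Omega_2$ if there exist $\Omega_1'\subseteq\Omega_1$,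 $\Omega_2'\subseteq\Omega_2$ with $|\Omega_i'|\ge(1-\alpha)|\Omega_i|$ ($i=1,2$) and a bijection $h:\Omega_1'\to\Omega_2'$; a map $F:\Omega_1\to[k]^V$ is an $\alpha$-function (for such a pair and bijection) if $F(\sigma)=h(\sigma)$ for all $\sigma\in\Omega_1'$. *)

From mathcomp Require Import all_boot all_order all_algebra.
Set Implicit Arguments. Unset Strict Implicit. Unset Printing Implicit Defensive.
Import Order.TTheory GRing.Theory Num.Theory.
Local Open Scope ring_scope.

(* The graph G = (V, E) is a symmetric irreflexive relation e on a finType V.
   Colours [k] = {1..k} are represented by 'I_k = {0..k-1}.
   A colouring is an element of [k]^V, i.e. {ffun V -> 'I_k}. *)
Definition colouring (V : finType) (k : nat) := {ffun V -> 'I_k}.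

Section Defs.
Variables (V : finType) (e : rel V) (k : nat) (v u : V).

Definition proper (s : colouring V k) : bool :=
  [forall x, forall y, e x y ==> (s x != s y)].

Definition Omega : {set colouring V k} := [set s | proper s].

Definition Omega_cq (c q : 'I_k) : {set colouring V k} :=
  [set s in Omega | (s v == c) && (s u == q)].

Definition good (s : colouring V k) : bool := s v != s u.

Definition Good : {set colouring V k} := [set s in Omega | good s].

Definition Qset (s : colouring V k) (q : 'I_k) : {set V} :=
  [set w | connect (fun x y => [&& e x y, s x \in [:: s v; q] & s y \in [:: s v; q]]) v w].

Definition Hswitch (s : colouring V k) (q : 'I_k) : colouring V k :=
  [ffun w => if w \in Qset s q then
               (if s w == s v then q else if s w == q then s v else s w)
             else s w].

Definition alpha_iso (R : numDomainType) (alpha : R)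
    (O1 O2 : {set colouring V k}) (F : colouring V k -> colouring V k) : Prop :=
  exists (O1' O2' : {set colouring V k}) (h : colouring V k -> colouring V k),
    [/\ O1' \subset O1, O2' \subset O2,
        (1 - alpha) * #|O1|%:R <= #|O1'|%:R,
        (1 - alpha) * #|O2|%:R <= #|O2'|%:R &
        [/\ {in O1', forall x, h x \in O2'},
            {in O1' &, injective h},
            {in O2', forall y, exists2 x, x \in O1' & h x = y} &
            {in O1', forall x, F x = h x}]].

Definition nu (R : fieldType) (A : {set colouring V k}) : R :=
  #|A :&: Good|%:R / #|Good|%:R.

(* nu': distribution of STEP(X) for X uniform over Omega.  If X is good the
   output is X; otherwise q is uniform over [k] \ {X(v)} and output H(X,q). *)
Definition nu' (R : fieldType) (A : {set colouring V k}) : R :=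
  (#|Omega|%:R)^-1 *
  \sum_(s in Omega)
     (if good s then (s \in A)%:R
      else ((k.-1)%:R)^-1 * \sum_(q : 'I_k | q != s v) (Hswitch s q \in A)%:R).

End Defs.

From mathcomp Require Import all_boot all_order all_algebra.
From mathcomp Require Import zify ring lra.
Import Order.TTheory GRing.Theory Num.Theory.
Set Implicit Arguments. Unset Strict Implicit. Unset Printing Implicit Defensive.
Local Open Scope ring_scope.

(* Split the colourings by the colours (c, q) of (v, u): the good ones are the
   Omega(q,c) with q != c, the bad ones the Omega(c,c).  STEP moves a bad
   colouring of Omega(c,c) into Omega(q,c) by H(.,q) with probability 1/(k-1),
   and the alpha-isomorphism shows that this hits A :&: Omega(q,c) at least
   |A :&: Omega(q,c)| - alpha |Omega(q,c)| times, while
   (1 - alpha) |Omega(c,c)| <= |Omega(q,c)|.  Summing over (c, q), an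
   elementary estimate on ratios gives nu(A) - nu'(A) <= alpha; the other
   inequality is the same bound for the complement of A. *)

Lemma sumr_indicator (R : pzSemiRingType) (T : finType) (X : {set T}) (P : pred T) :
  \sum_(s in X) (P s)%:R = #|[set s in X | P s]|%:R :> R.
Proof.
rewrite -sum1_card natr_sum [LHS]big_mkcond [RHS]big_mkcond /=.
by apply: eq_bigr => s _; rewrite inE; case: (s \in X); case: (P s).
Qed.

Lemma sumr_const_neq (R : pzSemiRingType) (T : finType) (c : T) (x : R) :
  \sum_(q | q != c) x = #|T|.-1%:R * x.
Proof.
by rewrite (eq_bigl (mem (predC1 c))) // sumr_const cardC1 mulr_natl.
Qed.

Lemma ratio_gap_le (R : realFieldType) (a G B S K alpha : R) :
  0 <= alpha <= 1 -> 1 <= K -> 0 <= B -> 0 < G -> 0 <= a <= G -> 0 <= S ->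
  a - alpha * G <= K * S -> K * (1 - alpha) * B <= G ->
  a / G - (a + S) / (G + B) <= alpha.
Proof.
move=> /andP[alpha_ge0 alpha_le1] K_ge1 B_ge0 G_gt0 /andP[a_ge0 a_leG] S_ge0 aS BG.
have GB_gt0 : 0 < G + B by lra.
have -> : a / G - (a + S) / (G + B) = (a * B - G * S) / (G * (G + B)).
  by field; rewrite !gt_eqF.
rewrite ler_pdivrMr ?mulr_gt0 //.
have [a_le | a_gt] := lerP a (alpha * G); first nra.
have d_ge0 : 0 <= a - alpha * G by rewrite subr_ge0 ltW.
have BG1 : (1 - alpha) * B <= G by nra.
have Bd : B * (a - alpha * G) <= G * G by nra.
set d := a - alpha * G in d_ge0 Bd *.
rewrite -(ler_pM2l (_ : 0 < K)); last by lra.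
have h1 : K * (1 - alpha) * B * d <= G * d by rewrite ler_wpM2r.
have h2 : G * d <= G * (K * S) by rewrite ler_wpM2l // ltW.
have h3 : K * alpha * (B * d) <= K * alpha * (G * G).
  by rewrite ler_wpM2l // mulr_ge0 //; lra.
rewrite /d in h1 h2 h3; lra.
Qed.

Section AlphaIsomorphism.
Variables (R : realFieldType) (V : finType) (k : nat) (alpha : R).
Variables (O1 O2 : {set colouring V k}) (F : colouring V k -> colouring V k).
Hypothesis iso : alpha_iso alpha O1 O2 F.

Lemma alpha_isoP : exists O1' : {set colouring V k},
  [/\ O1' \subset O1, F @: O1' \subset O2, {in O1' &, injective F},
      (1 - alpha) * #|O1|%:R <= #|O1'|%:R & (1 - alpha) * #|O2|%:R <= #|O1'|%:R].
Proof.
case: iso => O1' [O2' [h [sO1 sO2 cardO1 cardO2 [hO2 h_inj h_onto hF]]]].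
have FO1' : F @: O1' = O2'.
  apply/setP => y; apply/imsetP/idP => [[x xO1' ->]|yO2']; first by rewrite hF ?hO2.
  by have [x xO1' <-] := h_onto y yO2'; exists x; rewrite ?hF.
have F_inj : {in O1' &, injective F}.
  by move=> x y xO1' yO1'; rewrite !hF //; apply: h_inj.
exists O1'; split=> //; first by rewrite FO1'.
by rewrite -(card_in_imset F_inj) FO1'.
Qed.

Lemma alpha_iso_card : (1 - alpha) * #|O1|%:R <= #|O2|%:R.
Proof.
have [O1' [_ sFO2 F_inj cardO1 _]] := alpha_isoP.
by apply: le_trans cardO1 _; rewrite ler_nat -(card_in_imset F_inj) subset_leq_card.
Qed.

Lemma alpha_iso_preimage (A : {set colouring V k}) :
  #|A :&: O2|%:R - alpha * #|O2|%:R <= #|[set x in O1 | F x \in A]|%:R.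
Proof.
have [O1' [sO1 sFO2 F_inj _ cardO2]] := alpha_isoP.
set O2' := F @: O1'.
have in_image : (#|A :&: O2 :&: O2'| <= #|[set x in O1 | F x \in A]|)%N.
  set P := [set x in O1' | F x \in A].
  have P_inj : {in P &, injective F}.
    by apply: sub_in2 F_inj => x; rewrite inE => /andP[].
  apply: (@leq_trans #|F @: P|).
    apply/subset_leq_card/subsetP => y /setIP[/setIP[yA _] /imsetP[x xO1' yE]].
    by rewrite yE imset_f // inE xO1' -yE.
  rewrite card_in_imset //; apply/subset_leq_card/subsetP => x.
  by rewrite !inE => /andP[/(subsetP sO1) -> ->].
have off_image : (#|A :&: O2 :\: O2'| <= #|O2 :\: O2'|)%N.
  by apply/subset_leq_card/setSD/subsetIr.
have splitO2 : (#|O2'| + #|O2 :\: O2'| = #|O2|)%N.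
  by rewrite -(cardsID O2' O2) (setIidPr sFO2).
have splitA := cardsID O2' (A :&: O2).
have cardO2' : #|O2'| = #|O1'| := card_in_imset F_inj.
have : (#|A :&: O2| + #|O1'| <= #|[set x in O1 | F x \in A]| + #|O2|)%N.
  by rewrite -splitA -cardO2' -splitO2 addnAC addnA !leq_add.
rewrite -(ler_nat R) !natrD => count; lra.
Qed.

End AlphaIsomorphism.

Section Step.
Variables (R : realFieldType) (V : finType) (e : rel V) (k : nat) (v u : V).

Definition step_prob (s : colouring V k) (A : {set colouring V k}) : R :=
  if good v u s then (s \in A)%:R
  else (k.-1%:R)^-1 * \sum_(q : 'I_k | q != s v) (Hswitch e v s q \in A)%:R.

Lemma nu'E (A : {set colouring V k}) :
  nu' e v u R A = (#|Omega e k|%:R)^-1 * \sum_(s in Omega e k) step_prob s A.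
Proof. by []. Qed.

Lemma card_Good_setI (X : {set colouring V k}) :
  (\sum_(c : 'I_k) \sum_(q | q != c) #|X :&: Omega_cq e v u q c|)%N
    = #|X :&: Good e k v u|.
Proof.
rewrite -sum1_card (partition_big (fun s : colouring V k => s u) predT) //=.
apply: eq_bigr => c _.
rewrite (partition_big (fun s : colouring V k => s v) (fun q => q != c)) => [|s].
  apply: eq_bigr => q qc; rewrite -sum1_card; apply: eq_bigl => s.
  rewrite /Good /Omega_cq /good !inE.
  by case: eqVneq => [->|]; case: eqVneq => [->|]; rewrite ?qc ?andbF ?andbT.
by rewrite /Good /good !inE => /andP[/andP[_ /andP[_ sv_su]] /eqP <-].
Qed.

Lemma card_Good :
  (\sum_(c : 'I_k) \sum_(q | q != c) #|Omega_cq e v u q c|)%N = #|Good e k v u|.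
Proof.
rewrite -[Good e k v u]setTI -card_Good_setI.
by apply: eq_bigr => c _; apply: eq_bigr => q _; rewrite setTI.
Qed.

Lemma big_bad_diag (F : colouring V k -> R) :
  \sum_(s in Omega e k | ~~ good v u s) F s
    = \sum_(c : 'I_k) \sum_(s in Omega_cq e v u c c) F s.
Proof.
rewrite (partition_big (fun s : colouring V k => s v) predT) //=.
apply: eq_bigr => c _; apply: eq_bigl => s.
rewrite /Omega_cq /good !inE negbK -andbA.
by case: (eqVneq (s v) c) => [->|_]; rewrite ?eqxx ?(eq_sym c) ?andbT ?andbF.
Qed.

Lemma card_Omega_Good_diag :
  #|Omega e k|%:R = #|Good e k v u|%:R + \sum_(c : 'I_k) #|Omega_cq e v u c c|%:R :> R.
Proof.
rewrite -sum1_card natr_sum (bigID (good v u)) /=; congr (_ + _).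
  by rewrite -sum1_card natr_sum; apply: eq_bigl => s; rewrite /Good !inE.
by rewrite big_bad_diag; apply: eq_bigr => c _; rewrite -sum1_card natr_sum.
Qed.

Lemma big_step_prob_Good (A : {set colouring V k}) :
  \sum_(s in Omega e k | good v u s) step_prob s A = #|A :&: Good e k v u|%:R.
Proof.
rewrite (eq_bigr (fun s => (s \in A)%:R)) => [|s /andP[_ gs]]; last by rewrite /step_prob gs.
rewrite (eq_bigl (mem (Good e k v u))) => [|s]; last by rewrite /Good !inE.
by rewrite sumr_indicator; congr (_%:R); apply: eq_card => s; rewrite !inE andbC.
Qed.

Lemma Good_neq0_k_gt1 : Good e k v u != set0 -> (1 < k)%N.
Proof.
case/set0Pn=> s; rewrite !inE /good => /andP[_ suv].
by have := max_card [set s v; s u]; rewrite cards2 suv card_ord.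
Qed.

Lemma step_prob_ge0 (A : {set colouring V k}) (s : colouring V k) :
  0 <= step_prob s A.
Proof.
rewrite /step_prob; case: good => //.
by rewrite mulr_ge0 ?invr_ge0 // sumr_ge0.
Qed.

Lemma nu_setC (A : {set colouring V k}) :
  Good e k v u != set0 -> nu e v u R (~: A) = 1 - nu e v u R A.
Proof.
rewrite -card_gt0 -(ltr0n R) => G_gt0.
have GC : ~: A :&: Good e k v u = Good e k v u :\: A by rewrite setDE setIC.
rewrite /nu GC setIC -(cardsID A (Good e k v u)) natrD in G_gt0 *.
by field; rewrite gt_eqF.
Qed.

Section StepProb.
Hypothesis k_gt1 : (1 < k)%N.

Let K_neq0 : k.-1%:R != 0 :> R.
Proof. by rewrite pnatr_eq0; lia. Qed.

Lemma step_prob_diag (A : {set colouring V k}) (c : 'I_k) (s : colouring V k) :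
  s \in Omega_cq e v u c c ->
  k.-1%:R * step_prob s A = \sum_(q | q != c) (Hswitch e v s q \in A)%:R.
Proof.
rewrite inE => /and3P[_ /eqP sv /eqP su].
by rewrite /step_prob /good sv su eqxx /= mulrA mulfV ?mul1r.
Qed.

Lemma step_prob_setC (A : {set colouring V k}) (s : colouring V k) :
  step_prob s (~: A) = 1 - step_prob s A.
Proof.
have indC x : (x \in ~: A)%:R = 1 - (x \in A)%:R :> R.
  by rewrite inE; case: (x \in A); rewrite ?subr0 ?subrr.
rewrite /step_prob; case: good; first exact: indC.
rewrite (eq_bigr _ (fun q _ => indC _)) sumrB sumr_const_neq card_ord mulr1.
by rewrite mulrBr mulVf.
Qed.

Lemma nu'_setC (A : {set colouring V k}) :
  Omega e k != set0 -> nu' e v u R (~: A) = 1 - nu' e v u R A.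
Proof.
rewrite -card_gt0 -(ltr0n R) => N_gt0.
rewrite !nu'E (eq_bigr _ (fun s _ => step_prob_setC A s)) sumrB sumr_const.
by rewrite mulrBr -[1 *+ _]/(_%:R) mulVf ?gt_eqF.
Qed.

Variable alpha : R.
Hypothesis iso : forall c q : 'I_k, c != q ->
  alpha_iso alpha (Omega_cq e v u c c) (Omega_cq e v u q c) (fun s => Hswitch e v s q).

Lemma card_diag_le_Good :
  k.-1%:R * (1 - alpha) * \sum_(c : 'I_k) #|Omega_cq e v u c c|%:R
    <= #|Good e k v u|%:R.
Proof.
rewrite -card_Good natr_sum mulr_sumr.
apply: ler_sum => c _.
rewrite natr_sum -mulrA -[in k.-1](card_ord k) -(sumr_const_neq c).
apply: ler_sum => q qc.
by apply: alpha_iso_card; apply: iso; rewrite eq_sym.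
Qed.

Lemma Good_sub_le_bad_step (A : {set colouring V k}) :
  #|A :&: Good e k v u|%:R - alpha * #|Good e k v u|%:R
    <= k.-1%:R * \sum_(s in Omega e k | ~~ good v u s) step_prob s A.
Proof.
rewrite big_bad_diag mulr_sumr -card_Good -card_Good_setI.
rewrite !natr_sum mulr_sumr -sumrB; apply: ler_sum => c _.
rewrite mulr_sumr (eq_bigr _ (@step_prob_diag A c)).
rewrite exchange_big !natr_sum mulr_sumr -sumrB; apply: ler_sum => q qc.
rewrite sumr_indicator.
by apply: alpha_iso_preimage; apply: iso; rewrite eq_sym.
Qed.

Lemma nu_sub_nu'_le (A : {set colouring V k}) :
  Good e k v u != set0 -> 0 <= alpha <= 1 -> nu e v u R A - nu' e v u R A <= alpha.
Proof.
move=> Good_neq0 alpha01.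
rewrite /nu nu'E card_Omega_Good_diag (bigID (good v u)) /= big_step_prob_Good.
rewrite [X in _ - X]mulrC.
apply: (@ratio_gap_le R _ _ _ _ k.-1%:R) => //.
- by rewrite ler1n; lia.
- by rewrite sumr_ge0.
- by rewrite ltr0n card_gt0.
- by rewrite ler0n ler_nat subset_leq_card // subsetIr.
- by rewrite sumr_ge0 // => s _; apply: step_prob_ge0.
- exact: Good_sub_le_bad_step.
- exact: card_diag_le_Good.
Qed.

End StepProb.
End Step.

Theorem theorem3 (R : realFieldType) (V : finType) (e : rel V) (k : nat)
    (v u : V) (alpha : R) :
  symmetric e -> irreflexive e ->
  v != u -> ~~ e v u ->
  Omega e k != set0 ->
  Good e k v u != set0 ->
  0 <= alpha <= 1 ->
  (forall c q : 'I_k, c != q ->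
     alpha_iso alpha (Omega_cq e v u c c) (Omega_cq e v u q c)
               (fun s => Hswitch e v s q)) ->
  forall A : {set colouring V k},
    `| nu e v u R A - nu' e v u R A | <= alpha.
Proof.
move=> _ _ _ _ Omega_neq0 Good_neq0 alpha01 iso A.
have k_gt1 := Good_neq0_k_gt1 Good_neq0.
have lower := nu_sub_nu'_le k_gt1 iso.
rewrite ler_norml lower // andbT.
have := lower (~: A) Good_neq0 alpha01.
by rewrite nu_setC // nu'_setC //; lra.
Qed.
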